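(* In the two-principal common agency setting, suppose the cost $c$ is convex and homogeneous of degree $k_c>1$, the utilities $u_{P_1},u_{P_2}$ are concave and homogeneous of degree $k_u$ with $0<k_u<k_c$, and optima are interior with $SW^*_{\mathsf{FB}}>0$. Then $$\frac{SW^*_{\mathsf{LIN}}}{SW^*_{\mathsf{FB}}}=\frac{k_c(2k_c-1)^{-\frac{k_u}{k_c-k_u}}-k_u(2k_c-1)^{-\frac{k_c}{k_c-k_u}}}{k_c-k_u}.$$
   Context: Two principals offer linear contracts $\phi_{P_1},\phi_{P_2}\in\mathbb R^d$ to one agent who chooses $a\in\mathbb R_+^d$ to maximize $\langle\phi_{P_1}+\phi_{P_2},a\rangle-c(a)$; principal $i$'s payoff is $u_{P_i}(a)-\langle\phi_{P_i},a\rangle$. The linear-contract equilibrium action $a^*_{\mathsf{LIN}}$ is the action satisfying $\nabla c(a)=\frac{\nabla u_{P_1}(a)+\nabla u_{P_2}(a)}{2k_c-1}$. First-best social welfare: $SW^*_{\mathsf{FB}}=\max_a\{u_{P_1}(a)+u_{P_2}(a)-c(a)\}$; linear social welfare: $SW^*_{\mathsf{LIN}}=u_{P_1}(a^*_{\mathsf{LIN}})+u_{P_2}(a^*_{\mathsf{LIN}})-c(a^*_{\mathsf{LIN}})$. Homogeneous of degree $k$: $g(\lambda a)=\lambda^kg(a)$ for $\lambda>0$. *)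

From HB Require Import structures.
From mathcomp Require Import all_boot all_order all_algebra.
From mathcomp Require Import all_classical all_reals all_analysis.
Set Implicit Arguments. Unset Strict Implicit. Unset Printing Implicit Defensive.
Import Order.TTheory GRing.Theory Num.Theory.
Import numFieldNormedType.Exports.
Local Open Scope ring_scope.

Section Defs.
Variables (R : realType) (d : nat).

Definition nonneg_action (a : 'rV[R]_d) : Prop := forall i, 0 <= a ord0 i.
Definition interior_action (a : 'rV[R]_d) : Prop := forall i, 0 < a ord0 i.

Definition convex_on_actions (f : 'rV[R]_d -> R) : Prop :=
  forall a b, nonneg_action a -> nonneg_action b -> forall t : R, 0 <= t <= 1 ->
    f (t *: a + (1 - t) *: b) <= t * f a + (1 - t) * f b.
Definition concave_on_actions (f : 'rV[R]_d -> R) : Prop :=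
  forall a b, nonneg_action a -> nonneg_action b -> forall t : R, 0 <= t <= 1 ->
    t * f a + (1 - t) * f b <= f (t *: a + (1 - t) *: b).

Definition homogeneous (k : R) (f : 'rV[R]_d -> R) : Prop :=
  forall (lam : R) (a : 'rV[R]_d), 0 < lam -> nonneg_action a ->
    f (lam *: a) = lam `^ k * f a.

Definition grad (f : 'rV[R]_d -> R) (a : 'rV[R]_d) : 'rV[R]_d :=
  \row_i ('D_(delta_mx ord0 i) f a).

Definition social_welfare (u1 u2 c : 'rV[R]_d -> R) (a : 'rV[R]_d) : R :=
  u1 a + u2 a - c a.
End Defs.

From HB Require Import structures.
From mathcomp Require Import all_boot all_order all_algebra.
From mathcomp Require Import all_classical all_reals all_analysis.
From mathcomp Require Import lra ring.
Set Implicit Arguments. Unset Strict Implicit. Unset Printing Implicit Defensive.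
Import Order.TTheory GRing.Theory Num.Theory.
Import numFieldNormedType.Exports.
Local Open Scope ring_scope.

(* Put m = 2 k_c - 1 and lam = m^(1/(k_c - k_u)).  On the orthant, homogeneity
   gives SW(lam a) = lam^k_u (u1 + u2)(a) - lam^k_c c(a) = A ((u1 + u2)(a) - m c(a))
   with A = lam^k_u, and the first-order condition defining a_LIN says exactly that
   this function of a is stationary at a_LIN.  It is concave, so a_LIN maximises it,
   i.e. lam a_LIN is a first-best action.  Euler's identity D_a g(a) = k g(a) turns the
   first-order condition into k_c c(a_LIN) = m^-1 k_u (u1 + u2)(a_LIN), and both
   welfares become multiples of (u1 + u2)(a_LIN). *)

Section concave_tangent.
Variables (R : realFieldType) (V : normedModType R).

Lemma concave_le_derive (f : V -> R) (x v : V) :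
  derivable f x v ->
  (forall t, 0 < t < 1 -> t * f (x + v) + (1 - t) * f x <= f (x + t *: v)) ->
  f (x + v) - f x <= 'D_v f x.
Proof.
move=> df conc; rewrite /derive (cvg_at_rightE _ _ df); apply: limr_ge.
  apply/cvg_ex; exists ('D_v f x).
  move=> A /df /nbhs_ballP [_ /posnumP[e] eA].
  exists e%:num => [|t et /gt_eqF/negbT/eA]; [exact: gt0 | exact].
near=> t.
have t01 : 0 < t < 1.
  near: t; exists 1 => [/=|t /= t1 t0]; first exact: ltr01.
  by rewrite t0 /=; move: t1; rewrite sub0r normrN gtr0_norm.
have /andP [t0 _] := t01.
rewrite /= [t *: v + x]addrC -[_ *: _]/(_ * _) ler_pdivlMl //.
by have := conc t t01; lra.
Unshelve. all: by end_near. Qed.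

End concave_tangent.

Section actions.
Variables (R : realType) (d : nat).
Implicit Types (f g c : 'rV[R]_d -> R) (a x y : 'rV[R]_d).

Lemma nonneg_actionZ (lam : R) a :
  0 <= lam -> nonneg_action a -> nonneg_action (lam *: a).
Proof. by move=> lam0 na i; rewrite mxE mulr_ge0. Qed.

Lemma nonneg_action_convex (t : R) a x :
  0 <= t <= 1 -> nonneg_action a -> nonneg_action x ->
  nonneg_action (t *: a + (1 - t) *: x).
Proof.
move=> /andP [t0 t1] na nx i; rewrite mxE.
by apply: addr_ge0; apply: nonneg_actionZ; rewrite // subr_ge0.
Qed.

Lemma social_welfare_concave (u1 u2 : 'rV[R]_d -> R) c :
  concave_on_actions u1 -> concave_on_actions u2 -> convex_on_actions c ->
  concave_on_actions (social_welfare u1 u2 c).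
Proof.
move=> cc1 cc2 cvx a x na nx t t01; rewrite /social_welfare.
by have := cc1 _ _ na nx _ t01; have := cc2 _ _ na nx _ t01;
  have := cvx _ _ na nx _ t01; lra.
Qed.

Lemma concave_on_actions_scale (lam : R) f g :
  0 < lam -> concave_on_actions f ->
  (forall a, nonneg_action a -> g a = f (lam *: a)) -> concave_on_actions g.
Proof.
move=> lam0 cf gE a x na nx t t01.
rewrite !gE //; last exact: nonneg_action_convex.
rewrite scalerDr !scalerA ![lam * _]mulrC -!scalerA.
by apply: cf => //; apply: nonneg_actionZ; rewrite // ltW.
Qed.

Lemma concave_on_actions_le_derive f x y :
  concave_on_actions f -> nonneg_action x -> nonneg_action y ->
  derivable f x (y - x) -> f y - f x <= 'D_(y - x) f x.
Proof.
move=> cf nx ny dfx; rewrite -[in f y](subrKC x y).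
apply: concave_le_derive => // t /andP [t0 t1].
have -> : x + t *: (y - x) = t *: y + (1 - t) *: x.
  by rewrite scalerBr scalerBl scale1r addrCA.
by rewrite subrKC; apply: cf; rewrite // ltW ?ltW.
Qed.

Lemma concave_stationary_max f x :
  concave_on_actions f -> nonneg_action x ->
  (forall v, derivable f x v) -> (forall v, 'D_v f x = 0) ->
  forall y, nonneg_action y -> f y <= f x.
Proof.
move=> cf nx dfx Dfx0 y ny.
by rewrite -subr_le0 -(Dfx0 (y - x)) concave_on_actions_le_derive.
Qed.

Lemma stationary_rescaled_argmax (lam : R) f g x xmax :
  0 < lam -> concave_on_actions f ->
  (forall a, nonneg_action a -> g a = f (lam *: a)) ->
  nonneg_action x -> (forall v, derivable g x v) -> (forall v, 'D_v g x = 0) ->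
  (forall a, nonneg_action a -> f a <= f xmax) -> nonneg_action xmax ->
  f (lam *: x) = f xmax.
Proof.
move=> lam0 cf gE nx dgx Dgx0 fmax nxmax.
apply/le_anti/andP; split; first by apply/fmax/nonneg_actionZ => //; apply: ltW.
have lamK : lam *: (lam^-1 *: xmax) = xmax.
  by rewrite scalerA mulfV ?scale1r // gt_eqF.
have nx' : nonneg_action (lam^-1 *: xmax).
  by apply: nonneg_actionZ; rewrite ?invr_ge0 ?ltW.
rewrite -[in X in X <= _]lamK -!gE //.
exact: concave_stationary_max (concave_on_actions_scale lam0 cf gE) nx dgx Dgx0 _ nx'.
Qed.

Lemma derive_homogeneous (k : R) f a :
  homogeneous k f -> nonneg_action a -> 'D_a f a = k * f a.
Proof.
move=> hf na.
pose phi := fun t : R => f (t *: a).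
have -> : 'D_a f a = 'D_1 phi 1.
  rewrite /derive; apply: f_equal; apply: (f_equal (fun F => fmap F _)).
  apply/funext => h /=.
  by rewrite /phi /= scale1r -[h%:A]/(h * 1) mulr1 scalerDl scale1r.
rewrite (@near_eq_derive _ _ _ _ (f a \*: (fun t : R => t `^ k))); last first.
  near=> t; rewrite /phi /= hf //; first by rewrite mulrC.
  near: t; exact: lt_nbhsr.
rewrite deriveZ; last by apply: ex_derive; apply: is_derive1_powR; exact: ltr01.
have [_ ->] := is_derive1_powR k (@ltr01 R).
by rewrite powR1 mulr1 /GRing.scale /= mulrC.
Unshelve. all: by end_near. Qed.

Lemma derive_grad f a w :
  differentiable f a -> 'D_w f a = \sum_i w ord0 i * grad f a ord0 i.
Proof.
move=> df; rewrite deriveE // {1}(row_sum_delta w) linear_sum.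
by apply: eq_bigr => i _; rewrite linearZ /= /grad mxE deriveE.
Qed.

End actions.

Section first_order_condition.
Variables (R : realType) (d : nat) (u1 u2 c : 'rV[R]_d -> R) (a : 'rV[R]_d).
Hypotheses (d1 : differentiable u1 a) (d2 : differentiable u2 a)
  (dc : differentiable c a).

Lemma derive_of_grad_eq (s : R) :
  grad c a = s *: (grad u1 a + grad u2 a) ->
  forall w, 'D_w c a = s * ('D_w u1 a + 'D_w u2 a).
Proof.
move=> foc w; rewrite !derive_grad // -big_split mulr_sumr.
by apply: eq_bigr => i _; rewrite foc !mxE mulrCA mulrDr.
Qed.

Lemma derivable_welfare_combination (A B : R) w :
  derivable (A \*: (u1 + u2) - B \*: c) a w.
Proof.
apply: derivableB; [apply: derivableZ; apply: derivableD | apply: derivableZ];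
  exact: diff_derivable.
Qed.

Lemma derive_welfare_combination_eq0 (A m : R) :
  m != 0 -> (forall w, 'D_w c a = m^-1 * ('D_w u1 a + 'D_w u2 a)) ->
  forall w, 'D_w (A \*: (u1 + u2) - (A * m) \*: c) a = 0.
Proof.
move=> m0 foc w.
have [du1 du2 dcw] : [/\ derivable u1 a w, derivable u2 a w & derivable c a w].
  by split; exact: diff_derivable.
rewrite deriveB; last 2 first.
- by apply: derivableZ; apply: derivableD.
- exact: derivableZ.
rewrite deriveZ; last exact: derivableD.
rewrite deriveZ // deriveD // foc.
have scalerE (x y : R) : x *: y = x * y by [].
by rewrite !scalerE mulrA mulfK // subrr.
Qed.

End first_order_condition.

Lemma powR_root_shift (R : realType) (m p q : R) :
  0 < m -> p != q ->
  (m `^ (p - q)^-1) `^ p = (m `^ (p - q)^-1) `^ q * m.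
Proof.
move=> m0 pq; rewrite -!powRrM -[X in _ = _ * X](powRr1 (ltW m0)) -powRD; last first.
  by rewrite (gt_eqF m0) implybT.
by congr (_ `^ _); field; rewrite subr_eq0.
Qed.

Lemma welfare_ratio_identity (F : realFieldType) (U C A m kc ku : F) :
  0 < kc -> 0 < m -> ku < kc -> kc * C = m^-1 * (ku * U) ->
  0 < A * U - A * m * C ->
  (U - C) / (A * U - A * m * C) = (kc * A^-1 - ku * (A * m)^-1) / (kc - ku).
Proof.
move=> kc0 m0 kukc hC pos.
have hC' : C = m^-1 * (ku * U) / kc by rewrite -hC mulrC mulKf ?lt0r_neq0.
have A0 : A != 0 by apply: contraTneq pos => ->; rewrite !mul0r subrr ltxx.
have U0 : U != 0.
  apply: contraTneq pos => U0.
  by rewrite [A * U - _](_ : _ = 0) ?ltxx // hC' U0; ring.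
have kcku0 : kc - ku != 0 by rewrite subr_eq0 gt_eqF.
rewrite hC'; field.
have -> : A * U * kc - A * (ku * U) = A * U * (kc - ku) by ring.
by rewrite !mulf_neq0 ?kcku0 ?A0 ?U0 ?lt0r_neq0.
Qed.

Theorem mainTheorem11 (R : realType) (d : nat) (c u1 u2 : 'rV[R]_d -> R)
  (kc ku : R) :
  1 < kc -> 0 < ku -> ku < kc ->
  convex_on_actions c -> concave_on_actions u1 -> concave_on_actions u2 ->
  homogeneous kc c -> homogeneous ku u1 -> homogeneous ku u2 ->
  (forall a : 'rV[R]_d, interior_action a ->
     [/\ differentiable c a, differentiable u1 a & differentiable u2 a]) ->
  forall aFB : 'rV[R]_d,
    interior_action aFB ->
    (forall a, nonneg_action a ->
       social_welfare u1 u2 c a <= social_welfare u1 u2 c aFB) ->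
    0 < social_welfare u1 u2 c aFB ->
  forall aLIN : 'rV[R]_d,
    interior_action aLIN ->
    grad c aLIN = (2 * kc - 1)^-1 *: (grad u1 aLIN + grad u2 aLIN) ->
    social_welfare u1 u2 c aLIN / social_welfare u1 u2 c aFB =
      (kc * (2 * kc - 1) `^ (- (ku / (kc - ku)))
       - ku * (2 * kc - 1) `^ (- (kc / (kc - ku)))) / (kc - ku).
Proof.
move=> kc1 ku0 kukc cvx cc1 cc2 hc h1 h2 hdiff aFB iFB opt posFB aLIN iLIN foc.
set m := 2 * kc - 1; set lam := m `^ (kc - ku)^-1; set A := lam `^ ku.
have m0 : 0 < m by rewrite /m; lra.
have lam0 : 0 < lam by apply: powR_gt0.
have kcku : kc != ku by rewrite gt_eqF.
have lam_kc : lam `^ kc = A * m by apply: powR_root_shift.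
have nLIN : nonneg_action aLIN by move=> i; apply: ltW.
have nFB : nonneg_action aFB by move=> i; apply: ltW.
have [dc d1 d2] := hdiff aLIN iLIN.
set S := social_welfare u1 u2 c.
pose F := A \*: (u1 + u2) - (A * m) \*: c.
have FS a : nonneg_action a -> F a = S (lam *: a).
  move=> na; rewrite -[F a]/(A * (u1 a + u2 a) - A * m * c a).
  by rewrite /S /social_welfare hc // h1 // h2 // lam_kc -/A; ring.
have Dfoc := derive_of_grad_eq d1 d2 dc foc.
have S_lamLIN : S (lam *: aLIN) = S aFB.
  apply: (stationary_rescaled_argmax lam0 (social_welfare_concave cc1 cc2 cvx) FS
    nLIN _ _ opt nFB) => v.
  - exact: derivable_welfare_combination.
  - by apply: (derive_welfare_combination_eq0 d1 d2 dc); rewrite ?gt_eqF.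
have euler_LIN : kc * c aLIN = m^-1 * (ku * (u1 aLIN + u2 aLIN)).
  by rewrite -(derive_homogeneous hc nLIN) Dfoc (derive_homogeneous h1 nLIN)
    (derive_homogeneous h2 nLIN) -mulrDr.
have FLIN : F aLIN = A * (u1 aLIN + u2 aLIN) - A * m * c aLIN by [].
rewrite [ku / _]mulrC [kc / _]mulrC !powRN !powRrM -/lam -/A lam_kc.
rewrite -S_lamLIN -FS // FLIN.
apply: welfare_ratio_identity => //; first lra.
by rewrite -FLIN FS // S_lamLIN.
Qed.
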